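(* Let $p\ge2$, $K\ge1$ be integers, $s_1\ge0$ an integer, $s_2,\dots,s_p\in\mathbb{Z}$, and $z_1,\dots,z_p$ complex numbers of modulus $<1$. Then $$\mathrm{La}^K_{-s_1,s_2,\dots,s_p}(z_1,\dots,z_p)=P_{s_1}(K,z_1)\,\mathrm{La}^K_{s_2,\dots,s_p}(z_2,\dots,z_p)-\sum_{\ell=0}^{s_1}\frac{a_{1,\ell}(s_1,z_1)}{(1-z_1)^{s_1+1}z_1}\sum_{m=0}^{\ell}\binom{\ell}{m}(-1)^{\ell-m}\mathrm{La}^K_{s_2-m,s_3,\dots,s_p}(z_1z_2,z_3,\dots,z_p)$$ $$-\sum_{\ell=0}^{s_1}\frac{a_{2,\ell}(s_1,z_1)}{(1-z_1)^{s_1+1}}\sum_{m=0}^{\ell}\binom{\ell}{m}(-1)^{\ell-m}\mathrm{La}^K_{s_2-m,s_3,\dots,s_p}(z_2,\dots,z_p).$$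
   Context: Truncated large polylogarithm: $\mathrm{La}^K_{t_1,\dots,t_r}(w_1,\dots,w_r)=\sum_{K\ge k_1\ge\cdots\ge k_r\ge1}\frac{w_1^{k_1}\cdots w_r^{k_r}}{k_1^{t_1}\cdots k_r^{t_r}}$ (equal to $1$ when $r=0$). For $s\ge0$ and $K\ge0$, $P_s(K,z)=\sum_{k=1}^Kk^sz^k=\big(z\frac{d}{dz}\big)^s\big(z\frac{1-z^K}{1-z}\big)$, and $a_{1,\ell}(s,z),a_{2,\ell}(s,z)$ ($0\le\ell\le s$) are the polynomials in $z$, independent of $K$, such that $P_s(K,z)=\sum_{\ell=0}^s\frac{z^Ka_{1,\ell}(s,z)+a_{2,\ell}(s,z)}{(1-z)^{s+1}}K^\ell$ for all $K\ge0$ (with $0^0=1$); $a_{1,\ell}(s,z)$ is divisible by $z$. *)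

(* complex numbers are R[i] for an arbitrary real closed field R
   (this includes the usual complex numbers). *)
From HB Require Import structures.
From mathcomp Require Import all_boot all_order all_algebra.
From mathcomp Require Import complex.
Set Implicit Arguments. Unset Strict Implicit. Unset Printing Implicit Defensive.
Import Order.TTheory GRing.Theory Num.Theory.
Local Open Scope ring_scope.

Section Defs.
Variable C : fieldType.

(* Truncated large polylogarithm La^K_{t_1..t_r}(w_1..w_r), indices given as a
   list of pairs (t_i, w_i):
     sum_{K >= k_1 >= ... >= k_r >= 1} w_1^k_1 ... w_r^k_r / (k_1^t_1 ... k_r^t_r),
   equal to 1 for the empty list. *)
Fixpoint La (K : nat) (l : seq (int * C)) : C :=
  match l with
  | [::] => 1
  | (t, w) :: l' => \sum_(1 <= k < K.+1) w ^+ k / ((k%:R : C) ^ t) * La k l'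
  end.

Definition Pfun (s K : nat) (z : C) : C :=
  \sum_(1 <= k < K.+1) (k%:R : C) ^+ s * z ^+ k.

(* The defining property of the polynomials a_{1,l}(s,z), a_{2,l}(s,z), 0<=l<=s:
   P_s(K,z) = sum_{l=0}^s (z^K a_{1,l}(s,z) + a_{2,l}(s,z))/(1-z)^{s+1} K^l
   for all K >= 0 (as rational functions of z, i.e. for all z <> 1),
   and a_{1,l}(s,z) is divisible by z. *)
Definition a_polys_spec (s : nat) (a1 a2 : nat -> {poly C}) : Prop :=
  (forall l, 'X %| a1 l) /\
  (forall (K : nat) (z : C), z != 1 ->
     Pfun s K z =
     \sum_(0 <= l < s.+1)
        (z ^+ K * (a1 l).[z] + (a2 l).[z]) / (1 - z) ^+ s.+1 * (K%:R) ^+ l).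
End Defs.

(* Expanding [La] along its first entry gives [sum_k k^s1 z1^k] times the partial
   sums [sum_(j <= k) F j] of the series [F j = z2^j / j^s2 * La j rest]; exchanging
   the two sums yields [sum_j F j * (P_s1(K, z1) - P_s1(j - 1, z1))].  The closed
   form of [P_s1(j - 1, z1)] in the polynomials [a1], [a2], together with the
   binomial expansion of [(j - 1)^l], produces factors [j^m] and [z1^j]: the first
   lowers the exponent [s2] to [s2 - m], the second is absorbed into [z2].  The
   identity is algebraic, so of the analytic hypotheses only [z1 != 1] is used. *)

From HB Require Import structures.
From mathcomp Require Import all_boot all_order all_algebra.
From mathcomp Require Import complex.
From mathcomp Require Import ring.
Set Implicit Arguments. Unset Strict Implicit. Unset Printing Implicit Defensive.
Import Order.TTheory GRing.Theory Num.Theory.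
Local Open Scope ring_scope.

Lemma big_nat_mul_partial_sum (R : comPzRingType) (w F : nat -> R) (K : nat) :
  \sum_(1 <= k < K.+1) w k * \sum_(1 <= j < k.+1) F j =
  \sum_(1 <= j < K.+1) F j * \sum_(j <= k < K.+1) w k.
Proof.
elim: K => [|K IH]; first by rewrite !big_geq.
rewrite big_nat_recr //= IH [RHS]big_nat_recr //= big_nat1.
rewrite big_nat_cond [in RHS]big_nat_cond.
under [in RHS]eq_bigr => j /andP[/andP[_ lejK] _].
  rewrite big_nat_recr /=; last exact: ltnW.
  rewrite mulrDr; over.
rewrite big_split /= -big_nat_cond -big_distrl -addrA -mulrDl -big_nat_cond.
by rewrite -big_nat_recr // mulrC.
Qed.

Lemma exprB1n (R : comPzRingType) (x : R) (n : nat) :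
  (x - 1) ^+ n = \sum_(0 <= m < n.+1) 'C(n, m)%:R * (-1) ^+ (n - m) * x ^+ m.
Proof.
rewrite addrC exprDn big_mkord; apply: eq_bigr => m _.
by rewrite -mulr_natl mulrA.
Qed.

Lemma invr_expzBn (R : fieldType) (x : R) (t : int) (m : nat) : x != 0 ->
  (x ^ (t - m%:Z))^-1 = (x ^ t)^-1 * x ^+ m.
Proof. by move=> x_neq0; rewrite expfzDr // -invr_expz invfM invrK -exprnP. Qed.

Section TruncatedPolylog.
Variable C : fieldType.
Implicit Types (z w : C) (l : seq (int * C)).

Lemma La_neg_cons (K s : nat) z l :
  La K ((- s%:Z, z) :: l) = \sum_(1 <= k < K.+1) (k%:R : C) ^+ s * z ^+ k * La k l.
Proof.
by apply: eq_bigr => k _; rewrite -invr_expz invrK -exprnP [z ^+ k * _]mulrC.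
Qed.

Lemma Pfun_sub (s K j : nat) z : (0 < j <= K.+1)%N ->
  Pfun s K z - Pfun s j.-1 z = \sum_(j <= k < K.+1) (k%:R : C) ^+ s * z ^+ k.
Proof.
case: j => // j /= le_jK.
by rewrite /Pfun (big_cat_nat (n := j.+1)) //= addrC addrK.
Qed.

Lemma La_neg_cons_cons (K s : nat) (t : int) z w l :
  La K ((- s%:Z, z) :: (t, w) :: l) =
  Pfun s K z * La K ((t, w) :: l)
  - \sum_(1 <= j < K.+1) w ^+ j / (j%:R : C) ^ t * La j l * Pfun s j.-1 z.
Proof.
rewrite La_neg_cons /= big_nat_mul_partial_sum.
under [LHS]eq_big_nat => j /andP[j_gt0 le_jK].
  rewrite -Pfun_sub ?mulrBr; first over.
  by rewrite j_gt0 (ltnW le_jK).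
by rewrite sumrB -big_distrl /= mulrC.
Qed.

Lemma Pfun_pred_polysE (s : nat) (a1 a2 : nat -> {poly C}) z (j : nat) :
  a_polys_spec s a1 a2 -> z != 1 -> (0 < j)%N ->
  Pfun s j.-1 z =
  \sum_(0 <= l < s.+1)
     (z ^+ j * (a1 l %/ 'X).[z] + (a2 l).[z]) / (1 - z) ^+ s.+1 * (j%:R - 1) ^+ l.
Proof.
case: j => // j [X_dvd_a1 a_spec] z_neq1 _; rewrite a_spec //=.
apply: eq_bigr => l _.
by rewrite -[in LHS](divpK (X_dvd_a1 l)) hornerMX [_ * z]mulrC mulrA -exprSr mulrSr addrK.
Qed.

End TruncatedPolylog.

Lemma sum_binom_La_shift (C : numFieldType) (K n : nat) (t : int) (w : C)
    (l : seq (int * C)) :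
  \sum_(0 <= m < n.+1) 'C(n, m)%:R * (-1) ^+ (n - m) * La K ((t - m%:Z, w) :: l) =
  \sum_(1 <= j < K.+1) w ^+ j / (j%:R : C) ^ t * (j%:R - 1) ^+ n * La j l.
Proof.
under eq_bigr do rewrite /= big_distrr.
rewrite exchange_big_nat; apply: eq_big_nat => j /andP[j_gt0 _].
rewrite exprB1n !big_distrr big_distrl; apply: eq_bigr => m _ /=.
by rewrite invr_expzBn ?pnatr_eq0 -?lt0n //; ring.
Qed.

Lemma La_neg_cons_polysE (C : numFieldType) (K s1 : nat) (s2 : int) (z1 z2 : C)
    (rest : seq (int * C)) (a1 a2 : nat -> {poly C}) :
  z1 != 1 -> a_polys_spec s1 a1 a2 ->
  La K ((- (s1%:Z), z1) :: (s2, z2) :: rest) =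
    Pfun s1 K z1 * La K ((s2, z2) :: rest)
  - \sum_(0 <= l < s1.+1)
      ((a1 l %/ 'X).[z1] / (1 - z1) ^+ s1.+1) *
      \sum_(0 <= m < l.+1)
        ('C(l, m)%:R * (-1) ^+ (l - m) * La K ((s2 - m%:Z, z1 * z2) :: rest))
  - \sum_(0 <= l < s1.+1)
      ((a2 l).[z1] / (1 - z1) ^+ s1.+1) *
      \sum_(0 <= m < l.+1)
        ('C(l, m)%:R * (-1) ^+ (l - m) * La K ((s2 - m%:Z, z2) :: rest)).
Proof.
move=> z1_neq1 a_spec; rewrite La_neg_cons_cons -addrA -opprD -big_split /=.
congr (_ - _); under [RHS]eq_bigr do rewrite !sum_binom_La_shift.
under eq_big_nat => j /andP[j_gt0 _] do rewrite (Pfun_pred_polysE a_spec) //.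
under eq_bigr do rewrite big_distrr.
rewrite exchange_big_nat; apply: eq_bigr => l _.
rewrite !big_distrr -big_split; apply: eq_bigr => j _ /=.
by rewrite exprMn; ring.
Qed.

Theorem mainTheorem9 (R : rcfType) (K s1 : nat) (s2 : int) (z1 z2 : R[i])
    (rest : seq (int * R[i])) (a1 a2 : nat -> {poly R[i]}) :
  (1 <= K)%N ->
  `|z1| < 1 -> `|z2| < 1 -> (forall q, q \in rest -> `|q.2| < 1) ->
  a_polys_spec s1 a1 a2 ->
  La K ((- (s1%:Z), z1) :: (s2, z2) :: rest) =
    Pfun s1 K z1 * La K ((s2, z2) :: rest)
  - \sum_(0 <= l < s1.+1)
      ((a1 l %/ 'X).[z1] / (1 - z1) ^+ s1.+1) *
      \sum_(0 <= m < l.+1)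
        ('C(l, m)%:R * (-1) ^+ (l - m) * La K ((s2 - m%:Z, z1 * z2) :: rest))
  - \sum_(0 <= l < s1.+1)
      ((a2 l).[z1] / (1 - z1) ^+ s1.+1) *
      \sum_(0 <= m < l.+1)
        ('C(l, m)%:R * (-1) ^+ (l - m) * La K ((s2 - m%:Z, z2) :: rest)).
Proof.
move=> _ z1_lt1 _ _ a_spec; apply: La_neg_cons_polysE a_spec.
by apply: contraTneq z1_lt1 => ->; rewrite normr1 ltxx.
Qed.
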